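(* Let $\bar f:[a,b]\to\mathbb{R}_\mathcal{I}$ be an interval-valued function with $\bar f(x)=\langle f_c(x);f_w(x)\rangle$. Then $\bar f$ is differentiable at $x\in[a,b]$ if and only if $f_c$ is differentiable at $x$ and $f_w$ is multiplicatively differentiable at $x$. Moreover, in that case $$\bar f'(x)=\langle f_c'(x);\,f_w^*(x)\rangle,$$ where $f_w^*(x)=\lim_{h\to0}\left(\frac{f_w(x+h)}{f_w(x)}\right)^{1/h}=e^{(\ln f_w)'(x)}$ is the multiplicative derivative of $f_w$ at $x$.
   Context: An interval number is a closed interval $\bar a=[a_l,a_r]$ with $a_l<a_r$ real; $\mathbb{R}_\mathcal{I}$ is the set of interval numbers. Write $a_c=(a_l+a_r)/2$, $a_w=(a_r-a_l)/2>0$ and $\bar a=\langle a_c;a_w\rangle=[a_c-a_w,a_c+a_w]$. Operations: $\bar a-\bar b=\langle a_c-b_c;a_w/b_w\rangle$, and for real $k$, $k\bar a=\langle ka_c;a_w^k\rangle$; for real $h\neq0$, $\bar c/h$ means $\langle c_c/h;\,c_w^{1/h}\rangle$. Distance: $d(\bar a,\bar b)=\sqrt{(a_c-b_c)^2+(\ln a_w-\ln b_w)^2}$, and limits in $\mathbb{R}_\mathcal{I}$ are taken with respect to $d$. For an interval-valued function $\bar f:[a,b]\to\mathbb{R}_\mathcal{I}$, $\bar f(x)=[f_l(x),f_r(x)]$, put $f_c=(f_l+f_r)/2$, $f_w=(f_r-f_l)/2$. $\bar f$ is differentiable at $x_0$ if there is $\bar f'(x_0)\in\mathbb{R}_\mathcal{I}$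 with $\bar f'(x_0)=\lim_{h\to0}\frac{\bar f(x_0+h)-\bar f(x_0)}{h}$ (with $x_0+h\in[a,b]$). A positive function $g$ is multiplicatively differentiable at $x$ if $g^*(x)=\lim_{h\to0}(g(x+h)/g(x))^{1/h}$ exists. *)

From Stdlib Require Import Reals Lra.
From Coquelicot Require Import Coquelicot.
Open Scope R_scope.

Record interval := mkI { il : R; ir : R; ilr : il < ir }.

Definition ic (A : interval) : R := (il A + ir A) / 2.
Definition iw (A : interval) : R := (ir A - il A) / 2.

Lemma iw_pos (A : interval) : 0 < iw A.
Proof. unfold iw; destruct A as [l r h]; simpl; lra. Qed.

Lemma mkCW_proof (c w : R) : 0 < w -> c - w < c + w.
Proof. intros; lra. Qed.

(* <c; w> = [c - w, c + w] for w > 0 *)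
Definition mkCW (c w : R) (hw : 0 < w) : interval :=
  mkI (c - w) (c + w) (mkCW_proof c w hw).

Lemma isub_pos (A B : interval) : 0 < iw A / iw B.
Proof. apply Rdiv_lt_0_compat; apply iw_pos. Qed.

Definition isub (A B : interval) : interval :=
  mkCW (ic A - ic B) (iw A / iw B) (isub_pos A B).

Lemma idiv_pos (C : interval) (h : R) : 0 < Rpower (iw C) (1 / h).
Proof. unfold Rpower; apply exp_pos. Qed.

Definition idiv (C : interval) (h : R) : interval :=
  mkCW (ic C / h) (Rpower (iw C) (1 / h)) (idiv_pos C h).

Definition idist (A B : interval) : R :=
  sqrt ((ic A - ic B) ^ 2 + (ln (iw A) - ln (iw B)) ^ 2).

Definition incr_filter (a b x : R) : (R -> Prop) -> Prop :=
  within (fun h => h <> 0 /\ a <= x + h <= b) (locally 0).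

Definition I_derivative (f : R -> interval) (a b x : R) (L : interval) : Prop :=
  filterlim (fun h => idist (idiv (isub (f (x + h)) (f x)) h) L)
            (incr_filter a b x) (locally 0).

Definition has_deriv_on (g : R -> R) (a b x l : R) : Prop :=
  filterlim (fun h => (g (x + h) - g x) / h) (incr_filter a b x) (locally l).

(* multiplicative derivative of a positive function on [a, b] at x
   (limit taken in the positive reals) *)
Definition has_mderiv_on (g : R -> R) (a b x l : R) : Prop :=
  0 < l /\
  filterlim (fun h => Rpower (g (x + h) / g x) (1 / h)) (incr_filter a b x) (locally l).

Definition f_c (f : R -> interval) (x : R) : R := ic (f x).
Definition f_w (f : R -> interval) (x : R) : R := iw (f x).

From Stdlib Require Import Reals Lra ProofIrrelevance.
From Coquelicot Require Import Coquelicot.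
Open Scope R_scope.

(* In center/width coordinates the difference quotient of [f] is
   <(f_c(x+h) - f_c(x))/h ; exp((ln f_w(x+h) - ln f_w(x))/h)>, and the
   distance d is the Euclidean distance of the pairs (center, ln width).
   Hence d-convergence of the quotient to L means exactly: the difference
   quotient of f_c tends to the center of L, and that of ln f_w tends to
   ln of the width of L.  The latter is equivalent, by continuity of exp and
   ln, to the multiplicative derivative of f_w being the width of L.  Limits
   are unique because every neighbourhood of 0 contains admissible nonzero
   increments h with x + h in [a, b]. *)

Global Instance incr_filter_filter (a b x : R) : Filter (incr_filter a b x).
Proof. apply within_filter, locally_filter. Qed.

Lemma incr_filter_proper (a b x : R) : a < b -> a <= x <= b -> ProperFilter' (incr_filter a b x).
Proof.
  intros Hab Hx. constructor; [|exact (incr_filter_filter a b x)].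
  intros [eps Heps]. destruct eps as [eps eps_pos]; simpl in *.
  assert (Hsmall : forall h, 0 < Rabs h < eps -> a <= x + h <= b -> False).
  { intros h [Hh0 Hheps] Hxh. apply (Heps h); [|split; [|exact Hxh]].
    - change (Rabs (h - 0) < eps). now rewrite Rminus_0_r.
    - intros ->. rewrite Rabs_R0 in Hh0. lra. }
  destruct (Rlt_dec x b) as [Hxb|Hxb].
  - assert (0 < Rmin (eps / 2) ((b - x) / 2)) by (apply Rmin_pos; lra).
    pose proof (Rmin_l (eps / 2) ((b - x) / 2)).
    pose proof (Rmin_r (eps / 2) ((b - x) / 2)).
    set (h := Rmin (eps / 2) ((b - x) / 2)) in *.
    apply (Hsmall h); [rewrite Rabs_right|]; lra.
  - assert (0 < Rmin (eps / 2) ((x - a) / 2)) by (apply Rmin_pos; lra).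
    pose proof (Rmin_l (eps / 2) ((x - a) / 2)).
    pose proof (Rmin_r (eps / 2) ((x - a) / 2)).
    set (h := Rmin (eps / 2) ((x - a) / 2)) in *.
    apply (Hsmall (- h)); [rewrite Rabs_Ropp, Rabs_right|]; lra.
Qed.

Lemma has_deriv_on_unique {g : R -> R} {a b x l1 l2 : R} :
  a < b -> a <= x <= b ->
  has_deriv_on g a b x l1 -> has_deriv_on g a b x l2 -> l1 = l2.
Proof.
  intros Hab Hx H1 H2. pose proof (incr_filter_proper a b x Hab Hx).
  exact (filterlim_locally_unique _ _ _ H1 H2).
Qed.

Lemma sqrt_sum_sq_le_abs_add (u v : R) : sqrt (u ^ 2 + v ^ 2) <= Rabs u + Rabs v.
Proof.
  pose proof (Rabs_pos u). pose proof (Rabs_pos v).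
  rewrite <- (sqrt_pow2 (Rabs u + Rabs v)) by lra.
  apply sqrt_le_1_alt. rewrite <- (pow2_abs u), <- (pow2_abs v). nra.
Qed.

Lemma filterlim_euclid_dist_0_iff {T} (F : (T -> Prop) -> Prop) {FF : Filter F}
    (u v : T -> R) (p q : R) :
  filterlim (fun t => sqrt ((u t - p) ^ 2 + (v t - q) ^ 2)) F (locally 0) <->
  filterlim u F (locally p) /\ filterlim v F (locally q).
Proof.
  rewrite !filterlim_locally. split.
  - intros Hd. split; intros eps; generalize (Hd eps); apply filter_imp;
      intros t Ht; change (Rabs (sqrt ((u t - p) ^ 2 + (v t - q) ^ 2) - 0) < eps) in Ht;
      rewrite Rminus_0_r, Rabs_right in Ht by apply Rle_ge, sqrt_pos;
      destruct (sqrt_plus_sqr (u t - p) (v t - q)) as [Hmax _].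
    + change (Rabs (u t - p) < eps). pose proof (Rmax_l (Rabs (u t - p)) (Rabs (v t - q))). lra.
    + change (Rabs (v t - q) < eps). pose proof (Rmax_r (Rabs (u t - p)) (Rabs (v t - q))). lra.
  - intros [Hu Hv] eps.
    assert (Heps2 : 0 < eps / 2) by (destruct eps; simpl; lra).
    generalize (filter_and _ _ (Hu (mkposreal _ Heps2)) (Hv (mkposreal _ Heps2))).
    apply filter_imp. intros t [Hut Hvt].
    change (Rabs (u t - p) < eps / 2) in Hut. change (Rabs (v t - q) < eps / 2) in Hvt.
    change (Rabs (sqrt ((u t - p) ^ 2 + (v t - q) ^ 2) - 0) < eps).
    rewrite Rminus_0_r, Rabs_right by apply Rle_ge, sqrt_pos.
    pose proof (sqrt_sum_sq_le_abs_add (u t - p) (v t - q)). lra.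
Qed.

Lemma ic_mkCW (c w : R) (hw : 0 < w) : ic (mkCW c w hw) = c.
Proof. unfold ic, mkCW; simpl; lra. Qed.

Lemma iw_mkCW (c w : R) (hw : 0 < w) : iw (mkCW c w hw) = w.
Proof. unfold iw, mkCW; simpl; lra. Qed.

Lemma interval_eq_mkCW (A : interval) (c w : R) (hw : 0 < w) :
  ic A = c -> iw A = w -> A = mkCW c w hw.
Proof.
  destruct A as [l r hlr]. unfold ic, iw, mkCW; simpl. intros Hc Hw.
  assert (Hl : l = c - w) by lra. assert (Hr : r = c + w) by lra.
  subst l r. f_equal. apply proof_irrelevance.
Qed.

Lemma ic_idiv_isub (A B : interval) (h : R) :
  ic (idiv (isub A B) h) = (ic A - ic B) / h.
Proof. unfold idiv, isub. now rewrite !ic_mkCW. Qed.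

(* No [h <> 0] is needed: for [h = 0] both sides are [0], as [/ 0 = 0]. *)
Lemma ln_iw_idiv_isub (A B : interval) (h : R) :
  ln (iw (idiv (isub A B) h)) = (ln (iw A) - ln (iw B)) / h.
Proof.
  unfold idiv, isub, Rpower. rewrite !iw_mkCW, ln_exp, ln_div by apply iw_pos.
  unfold Rdiv. ring.
Qed.

Lemma has_mderiv_on_iff_ln (g : R -> R) (a b x l : R) :
  (forall y, 0 < g y) ->
  has_mderiv_on g a b x l <-> 0 < l /\ has_deriv_on (fun y => ln (g y)) a b x (ln l).
Proof.
  intros Hg. unfold has_mderiv_on, has_deriv_on.
  set (D := fun h => (ln (g (x + h)) - ln (g x)) / h).
  assert (HD : forall h, Rpower (g (x + h) / g x) (1 / h) = exp (D h)).
  { intros h. unfold Rpower, D. rewrite ln_div by apply Hg. unfold Rdiv. f_equal. ring. }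
  split; intros [Hl Hlim]; split; [exact Hl| |exact Hl|].
  - apply (filterlim_ext (fun h => ln (Rpower (g (x + h) / g x) (1 / h)))).
    { intros h. now rewrite HD, ln_exp. }
    apply (filterlim_comp _ _ _ _ ln _ (locally l)); [exact Hlim|].
    now apply continuous_ln.
  - apply (filterlim_ext (fun h => exp (D h))); [intros h; now rewrite HD|].
    rewrite <- (exp_ln l Hl).
    apply (filterlim_comp _ _ _ _ exp _ (locally (ln l))); [exact Hlim|].
    apply continuous_exp.
Qed.

Lemma has_mderiv_on_unique {g : R -> R} {a b x l1 l2 : R} :
  (forall y, 0 < g y) -> a < b -> a <= x <= b ->
  has_mderiv_on g a b x l1 -> has_mderiv_on g a b x l2 -> l1 = l2.
Proof.
  intros Hg Hab Hx H1 H2.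
  apply has_mderiv_on_iff_ln in H1 as [Hl1 H1]; [|exact Hg].
  apply has_mderiv_on_iff_ln in H2 as [Hl2 H2]; [|exact Hg].
  apply ln_inv; [exact Hl1|exact Hl2|].
  exact (has_deriv_on_unique Hab Hx H1 H2).
Qed.

Lemma I_derivative_iff (f : R -> interval) (a b x : R) (L : interval) :
  I_derivative f a b x L <->
  has_deriv_on (f_c f) a b x (ic L) /\ has_mderiv_on (f_w f) a b x (iw L).
Proof.
  rewrite has_mderiv_on_iff_ln by (intros; apply iw_pos).
  pose proof (iw_pos L).
  enough (I_derivative f a b x L <->
          has_deriv_on (f_c f) a b x (ic L) /\
          has_deriv_on (fun y => ln (f_w f y)) a b x (ln (iw L))) by tauto.
  unfold I_derivative, has_deriv_on, idist.
  rewrite <- filterlim_euclid_dist_0_iff by apply incr_filter_filter.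
  split; apply filterlim_ext; intros h; unfold f_c, f_w;
    now rewrite ic_idiv_isub, ln_iw_idiv_isub.
Qed.

Theorem theorem4p2 (a b : R) (f : R -> interval) (x : R) :
  a < b -> a <= x <= b ->
  ((exists L : interval, I_derivative f a b x L) <->
   ((exists c' : R, has_deriv_on (f_c f) a b x c') /\
    (exists w' : R, has_mderiv_on (f_w f) a b x w'))) /\
  (forall (L : interval) (c' w' : R) (hw : 0 < w'),
     I_derivative f a b x L ->
     has_deriv_on (f_c f) a b x c' ->
     has_mderiv_on (f_w f) a b x w' ->
     L = mkCW c' w' hw) /\
  (forall w' : R, has_mderiv_on (f_w f) a b x w' ->
     has_deriv_on (fun y => ln (f_w f y)) a b x (ln w')).
Proof.
  intros Hab Hx.
  assert (Hw_pos : forall y, 0 < f_w f y) by (intros; apply iw_pos).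
  split; [|split].
  - split.
    + intros [L HL]. apply I_derivative_iff in HL as [Hc Hw].
      split; eexists; eassumption.
    + intros [[c' Hc] [w' Hw]]. exists (mkCW c' w' (proj1 Hw)).
      apply I_derivative_iff. rewrite ic_mkCW, iw_mkCW. now split.
  - intros L c' w' hw HL Hc Hw. apply I_derivative_iff in HL as [HLc HLw].
    apply interval_eq_mkCW.
    + exact (has_deriv_on_unique Hab Hx HLc Hc).
    + exact (has_mderiv_on_unique Hw_pos Hab Hx HLw Hw).
  - intros w' Hw. now apply has_mderiv_on_iff_ln in Hw as [_ Hln].
Qed.
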